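(* Let $X_1,\dots,X_n$ be real-valued random variables and let $f_1,\dots,f_M$ be (entrywise) non-decreasing functions on $\mathbb R^n$. For each $j\in\{1,\dots,M\}$ let $Y_j=f_j(X_1,\dots,X_n)$. If $(X_1,\dots,X_n)\uparrow^{\mathrm{st}}Y_j$, then $(Y_1,\dots,Y_M)$ is PRDS on the subset $\{j\}$.
   Context: For vectors, $x\preceq y$ means $x_i\le y_i$ for all $i$; a function $f$ is non-decreasing if $x\preceq y$ implies $f(x)\le f(y)$. A random vector $X$ is stochastically increasing in a random variable $Y$, written $X\uparrow^{\mathrm{st}}Y$, if the regular conditional probability $\Pr(X\in\cdot\mid Y=y)$ exists and for every bounded non-decreasing function $g$, $y\mapsto\mathbb E[g(X)\mid Y=y]$ is non-decreasing. A set $D\subset\mathbb R^m$ is non-decreasing if $x\preceq y$, $x\in D$ imply $y\in D$. A random vector $Y\in\mathbb R^m$ is PRDS on $T\subset\{1,\dots,m\}$ if $t\mapsto\Pr(Y\in D\mid Y_i=t)$ is non-decreasing for every non-decreasing set $D$ and every $i\in T$. *)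

From HB Require Import structures.
From mathcomp Require Import all_boot all_order all_algebra.
From mathcomp Require Import all_classical all_reals all_analysis.
From mathcomp Require Import measurable_realfun.
Set Implicit Arguments. Unset Strict Implicit. Unset Printing Implicit Defensive.
Import Order.TTheory GRing.Theory Num.Theory.
Local Open Scope classical_set_scope.
Local Open Scope ring_scope.

(* R^n is represented by n.-tuple R, carrying the library's product
   sigma-algebra (generated by the coordinate projections). *)

Definition vle (R : realType) (n : nat) (x y : n.-tuple R) : Prop :=
  forall i : 'I_n, tnth x i <= tnth y i.

Definition nondecr_fun (R : realType) (n : nat) (g : n.-tuple R -> R) : Prop :=
  forall x y, vle x y -> g x <= g y.

Definition nondecr_set (R : realType) (n : nat) (D : set (n.-tuple R)) : Prop :=
  forall x y, vle x y -> D x -> D y.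

Definition rvec d (T : measurableType d) (R : realType) (n : nat)
  (X : 'I_n -> T -> R) : T -> n.-tuple R := fun t => [tuple X i t | i < n].

Definition is_rcp d (T : measurableType d) (R : realType) (n : nat)
  (P : probability T R) (Z : T -> n.-tuple R) (W : T -> R)
  (k : R -> probability (n.-tuple R) R) : Prop :=
  (forall A : set (n.-tuple R), measurable A -> measurable_fun [set: R] ((fun y => k y A) : R -> \bar R)) /\
  (forall (A : set (n.-tuple R)) (B : set R), measurable A -> measurable B ->
     P (Z @^-1` A `&` W @^-1` B) = (\int[P]_(t in W @^-1` B) k (W t) A)%E).

(* Z is stochastically increasing in W: a regular conditional probability
   exists such that y |-> E[g(Z) | W = y] = ∫ g d(k y) is non-decreasing
   for every bounded (measurable) non-decreasing g. *)
Definition stoch_incr d (T : measurableType d) (R : realType) (n : nat)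
  (P : probability T R) (Z : T -> n.-tuple R) (W : T -> R) : Prop :=
  exists k : R -> probability (n.-tuple R) R, is_rcp P Z W k /\
    forall g : n.-tuple R -> R, measurable_fun setT g ->
      (exists C : R, forall x, `|g x| <= C) -> nondecr_fun g ->
      forall y1 y2 : R, y1 <= y2 ->
        (\int[k y1]_x (g x)%:E <= \int[k y2]_x (g x)%:E)%E.

(* Y (m-dimensional) is PRDS on S ⊂ {1..m}: for each i ∈ S a regular
   conditional probability of Y given Y_i exists such that
   t |-> Pr(Y ∈ D | Y_i = t) is non-decreasing for every (measurable)
   non-decreasing set D. *)
Definition PRDS d (T : measurableType d) (R : realType) (m : nat)
  (P : probability T R) (Y : T -> m.-tuple R) (S : set 'I_m) : Prop :=
  forall i, S i ->
    exists k : R -> probability (m.-tuple R) R,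
      is_rcp P Y (fun t => tnth (Y t) i) k /\
      forall D : set (m.-tuple R), measurable D -> nondecr_set D ->
        forall t1 t2 : R, t1 <= t2 -> (k t1 D <= k t2 D)%E.

From HB Require Import structures.
From mathcomp Require Import all_boot all_order all_algebra.
From mathcomp Require Import all_classical all_reals all_analysis.
From mathcomp Require Import measurable_realfun.
Import Order.TTheory GRing.Theory Num.Theory.
Local Open Scope classical_set_scope.
Local Open Scope ring_scope.

Set Implicit Arguments.
Unset Strict Implicit.
Unset Printing Implicit Defensive.

(* Write Y = F(X) with F := (f_1, ..., f_M).  Pushing a regular conditional
   probability k of X given Y_j forward along F gives one of Y given Y_j, and
   Pr(Y ∈ D | Y_j = y) = k y (F^-1 D).  Since every f_k is non-decreasing,
   F^-1 D is a non-decreasing set whenever D is, so its indicator is a bounded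
   non-decreasing function, and stochastic increase of X in Y_j makes
   y |-> k y (F^-1 D) non-decreasing. *)

Lemma measurable_fun_mktuple d d' (T : measurableType d) (T' : measurableType d')
    (M : nat) (f : 'I_M -> T -> T') :
  (forall k, measurable_fun setT (f k)) ->
  measurable_fun setT (fun x => [tuple f k x | k < M]).
Proof.
move=> mf; apply/measurable_fun_tnthP => k.
rewrite (_ : _ \o _ = f k) //.
by apply/funext => x /=; rewrite tnth_mktuple.
Qed.

Lemma vle_mktuple (R : realType) (n M : nat) (f : 'I_M -> n.-tuple R -> R)
    (x y : n.-tuple R) :
  (forall k, nondecr_fun (f k)) -> vle x y ->
  vle [tuple f k x | k < M] [tuple f k y | k < M].
Proof. by move=> f_nd xy k; rewrite !tnth_mktuple; exact: f_nd. Qed.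

Lemma nondecr_set_preimage (R : realType) (n m : nat)
    (F : n.-tuple R -> m.-tuple R) (D : set (m.-tuple R)) :
  (forall x y, vle x y -> vle (F x) (F y)) -> nondecr_set D ->
  nondecr_set (F @^-1` D).
Proof. by move=> F_nd D_nd x y /F_nd; exact: D_nd. Qed.

Lemma nondecr_fun_indic (R : realType) (n : nat) (D : set (n.-tuple R)) :
  nondecr_set D -> nondecr_fun (\1_D : n.-tuple R -> R).
Proof.
move=> D_nd x y xy; rewrite /indic.
have [/set_mem Dx|_] := boolP (x \in D); last by case: (y \in D).
by rewrite mem_set //; exact: D_nd Dx.
Qed.

Lemma is_rcp_distribution d (T : measurableType d) (R : realType) (n m : nat)
    (P : probability T R) (Z : T -> n.-tuple R) (W : T -> R)
    (k : R -> probability (n.-tuple R) R)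
    (F : {mfun n.-tuple R >-> m.-tuple R}) :
  is_rcp P Z W k -> is_rcp P (F \o Z) W (fun y => distribution (k y) F).
Proof.
move=> [k_meas k_disint]; split=> [A mA | A B mA mB].
- exact: k_meas (measurable_funPTI F mA).
- exact: k_disint (measurable_funPTI F mA) mB.
Qed.

Lemma stoch_incr_nondecr_set d (T : measurableType d) (R : realType) (n : nat)
    (P : probability T R) (Z : T -> n.-tuple R) (W : T -> R) :
  stoch_incr P Z W ->
  exists k : R -> probability (n.-tuple R) R, is_rcp P Z W k /\
    forall A : set (n.-tuple R), measurable A -> nondecr_set A ->
      forall y1 y2 : R, y1 <= y2 -> (k y1 A <= k y2 A)%E.
Proof.
move=> [k [k_rcp k_mono]]; exists k; split => // A mA A_nd y1 y2 y12.
have indic_bounded : exists C : R, forall x, `|(\1_A : _ -> R) x| <= C.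
  by exists 1 => x; rewrite /indic; case: (x \in A); rewrite ?normr1 ?normr0.
have := k_mono _ (measurable_indic mA) indic_bounded (nondecr_fun_indic A_nd)
  _ _ y12.
by rewrite !integral_indic // !setIT.
Qed.

Theorem theorem3 (d : measure_display) (T : measurableType d) (R : realType)
  (P : probability T R) (n M : nat)
  (X : 'I_n -> {mfun T >-> R})
  (f : 'I_M -> n.-tuple R -> R)
  (f_meas : forall j, measurable_fun setT (f j))
  (f_nd : forall j, nondecr_fun (f j))
  (j : 'I_M)
  (hSI : stoch_incr P (rvec X) (fun t => f j (rvec X t))) :
  PRDS P (fun t => [tuple f k (rvec X t) | k < M]) [set j].
Proof.
move=> _ ->.
pose F : {mfun n.-tuple R >-> M.-tuple R} :=
  mfun_Sub (mem_set (measurable_fun_mktuple f_meas)).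
have [k [k_rcp k_mono]] := stoch_incr_nondecr_set hSI.
have -> : (fun t => tnth [tuple f k (rvec X t) | k < M] j) =
          (fun t => f j (rvec X t)).
  by apply/funext => t; rewrite tnth_mktuple.
exists (fun y => distribution (k y) F); split.
  exact: (is_rcp_distribution F k_rcp).
move=> D mD D_nd t1 t2 t12.
apply: k_mono t12; first exact: measurable_funPTI.
by apply: nondecr_set_preimage D_nd => x y; exact: vle_mktuple.
Qed.
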